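(* Let $d$ be a positive integer and let $A\in\mathbb{R}^{[m]\times[2]}$ be a matrix that does not have an elimination ordering. Then there exists $b\in\mathbb{R}^{[m]}$ such that the solution graph $G(R(A,b))$ is not connected.
   Context: Fix a positive integer $d$ and let $D=\{0,1,\dots,d\}$; $[n]=\{1,\dots,n\}$. For $A\in\mathbb{R}^{[m]\times[n]}$ and $b\in\mathbb{R}^{[m]}$, $R(A,b)=\{x\in D^{[n]} : Ax\ge b\}$. For $R\subseteq D^{[n]}$, the solution graph $G(R)$ is the undirected graph with vertex set $R$ in which $x,y$ are adjacent iff they differ in exactly one coordinate. A matrix $A=(a_{ij})$ with column index set $J$ can be eliminated at column $j\in J$ if (i) for every row $i$ with $a_{ij}>0$ we have $a_{ij'}=0$ for all $j'\in J\setminus\{j\}$, or (ii) for every row $i$ with $a_{ij}<0$ we have $a_{ij'}=0$ for all $j'\in J\setminus\{j\}$. For $J'\subseteq[n]$, $\mathrm{elm}(A,J')$ is the submatrix of $A$ obtained by deleting the columns indexed by $J'$. A sequence $(j_1,\dots,j_n)$ of the elements of $[n]$ is an elimination ordering (EO) of $A$ if for every $t\in[n]$ the matrix $\mathrm{elm}(A,\{j_1,\dots,j_{t-1}\})$ can be eliminated at column $j_t$. *)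

From HB Require Import structures.
From mathcomp Require Import all_boot all_order all_algebra.
From mathcomp Require Import reals.
Set Implicit Arguments. Unset Strict Implicit. Unset Printing Implicit Defensive.
Import Order.TTheory GRing.Theory Num.Theory.
Local Open Scope ring_scope.

(* Points of D^[n] with D = {0,...,d} are finite functions 'I_n -> 'I_d.+1. *)
Definition point (d n : nat) := {ffun 'I_n -> 'I_d.+1}.

Definition sol_set (R : realType) (d m n : nat) (A : 'M[R]_(m, n)) (b : 'cV[R]_m)
  : {set point d n} :=
  [set x : point d n | [forall i : 'I_m,
     b i ord0 <= \sum_(j < n) A i j * ((nat_of_ord (x j))%:R)]].

Definition adj_pts (d n : nat) (x y : point d n) : bool :=
  #|[set j : 'I_n | x j != y j]| == 1%N.

Definition sol_graph_rel (d n : nat) (S : {set point d n}) : rel (point d n) :=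
  fun x y => [&& x \in S, y \in S & adj_pts x y].

Definition sol_graph_connected (d n : nat) (S : {set point d n}) : Prop :=
  forall x y, x \in S -> y \in S -> connect (sol_graph_rel S) x y.

(* The submatrix of A with remaining column index set J can be eliminated at
   column j \in J (rows are kept; only entries in columns of J matter). *)
Definition can_elim (R : realType) (m n : nat) (A : 'M[R]_(m, n))
  (J : {set 'I_n}) (j : 'I_n) : bool :=
  (j \in J) &&
  ([forall i : 'I_m, (0 < A i j) ==>
       [forall j' in J, (j' != j) ==> (A i j' == 0)]]
   || [forall i : 'I_m, (A i j < 0) ==>
       [forall j' in J, (j' != j) ==> (A i j' == 0)]]).

Definition is_EO (R : realType) (m n : nat) (A : 'M[R]_(m, n)) (s : seq 'I_n)
  : Prop :=
  perm_eq s (enum 'I_n) /\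
  forall (t : nat) (j0 : 'I_n), (t < n)%N ->
    can_elim A [set j : 'I_n | j \notin take t s] (nth j0 s t).

Definition has_EO (R : realType) (m n : nat) (A : 'M[R]_(m, n)) : Prop :=
  exists s : seq 'I_n, is_EO A s.

From mathcomp Require Import all_boot all_order all_algebra.
From mathcomp Require Import reals lra.
Set Implicit Arguments. Unset Strict Implicit. Unset Printing Implicit Defensive.
Import Order.TTheory GRing.Theory Num.Theory.
Local Open Scope ring_scope.

(* With two columns, an elimination ordering exists as soon as one column can
   be eliminated first.  If neither can, the sign patterns of the rows yield
   rows i, k with A i 0 > 0 > A k 0 and A i 1, A k 1 of opposite signs.  Taking
   b = componentwise minimum of A p and A q for two well-chosen points p, q
   with p_0 = 0 < q_0 makes both p and q feasible, while the two rows i, k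
   forbid every feasible edge between the hyperplane {x_0 = 0} and its
   complement (such an edge only moves x_0), so p and q lie in different
   components. *)

Section Adjacency.

Variables d n : nat.
Implicit Types x y : point d n.

Lemma adj_pts_sym x y : adj_pts x y = adj_pts y x.
Proof.
by rewrite /adj_pts; congr (_ == _); apply: eq_card => j; rewrite !inE eq_sym.
Qed.

Lemma adj_pts_agree x y j k : adj_pts x y -> x j != y j -> k != j -> x k = y k.
Proof.
case/cards1P=> z Dz xyj kj; apply/eqP/negPn; apply: contra kj => xyk.
have mem_z l : x l != y l -> l = z by move=> xyl; apply/set1P; rewrite -Dz inE.
by rewrite (mem_z _ xyk) (mem_z _ xyj).
Qed.

Lemma disconnected_by_coordinate (S : {set point d n}) j p q :
  p \in S -> q \in S -> p j = ord0 -> q j != ord0 ->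
  (forall x y, x \in S -> y \in S -> x j = ord0 -> y j != ord0 ->
     (forall k, k != j -> x k = y k) -> False) ->
  ~ sol_graph_connected S.
Proof.
move=> pS qS p0 q0 no_cross conn.
have cross x y : x \in S -> y \in S -> adj_pts x y -> x j = ord0 -> y j = ord0.
  move=> xS yS xy x0; apply/eqP/negPn/negP => y0.
  apply: (no_cross _ _ xS yS x0 y0) => k; apply: adj_pts_agree xy _.
  by rewrite x0 eq_sym.
have cl : closed (sol_graph_rel S) [pred x : point d n | x j == ord0].
  move=> x y /and3P[xS yS xy]; rewrite !inE.
  apply/eqP/eqP; first exact: cross.
  by apply: cross; rewrite // adj_pts_sym.
by move: (closed_connect cl (conn p q pS qS)); rewrite !inE p0 eqxx (negPf q0).
Qed.

End Adjacency.

Section RightHandSides.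

Variables (R : realType) (d m n : nat) (A : 'M[R]_(m, n)).

Definition row_val (i : 'I_m) (x : point d n) : R :=
  \sum_(j < n) A i j * (x j)%:R.

Lemma in_sol_set b x :
  (x \in sol_set d A b) = [forall i, b i ord0 <= row_val i x].
Proof. by rewrite inE. Qed.

Definition min_rhs (p q : point d n) : 'cV[R]_m :=
  \col_i Num.min (row_val i p) (row_val i q).

Lemma min_rhs_solL p q : p \in sol_set d A (min_rhs p q).
Proof.
by rewrite in_sol_set; apply/forallP => i; rewrite mxE ge_min lexx.
Qed.

Lemma min_rhs_solR p q : q \in sol_set d A (min_rhs p q).
Proof.
by rewrite in_sol_set; apply/forallP => i; rewrite mxE ge_min lexx orbT.
Qed.

End RightHandSides.

Definition pt2 (d a b : nat) : point d 2 :=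
  [ffun j => inord (if j == ord0 then a else b)].

Lemma pt2_0 d a b : (a <= d)%N -> pt2 d a b ord0 = a :> nat.
Proof. by move=> ad; rewrite ffunE /= inordK. Qed.

Lemma pt2_1 d a b : (b <= d)%N -> pt2 d a b ord_max = b :> nat.
Proof. by move=> bd; rewrite ffunE /= inordK. Qed.

Section TwoColumns.

Variables (R : realType) (d m : nat) (A : 'M[R]_(m, 2)).
Hypothesis d_gt0 : (0 < d)%N.

Definition lin2 i (s t : nat) : R := A i ord0 * s%:R + A i ord_max * t%:R.

Lemma row_val2 i (x : point d 2) : row_val A i x = lin2 i (x ord0) (x ord_max).
Proof.
rewrite /row_val big_ord_recl big_ord1.
by have -> : lift ord0 ord0 = ord_max :> 'I_2 by apply: val_inj.
Qed.

Lemma pt2_disconnected a c e : (a <= d)%N -> (0 < c <= d)%N -> (e <= d)%N ->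
  (* (0, t) and (s, t) are the ends of a feasible edge leaving {x_0 = 0}. *)
  (forall s t, (0 < s)%N -> (t <= d)%N ->
     (forall i, Num.min (lin2 i 0 a) (lin2 i c e) <= lin2 i 0 t) ->
     (forall i, Num.min (lin2 i 0 a) (lin2 i c e) <= lin2 i s t) -> False) ->
  ~ sol_graph_connected (sol_set d A (min_rhs A (pt2 d 0 a) (pt2 d c e))).
Proof.
move=> ad /andP[c_gt0 cd] ed no_cross.
apply: (disconnected_by_coordinate (j := ord0) (min_rhs_solL _ _ _)
                                    (min_rhs_solR _ _ _)).
- by apply: val_inj => /=; rewrite pt2_0.
- by rewrite -val_eqE /= pt2_0 // -lt0n.
move=> x y; rewrite !in_sol_set => /forallP xS /forallP yS /(congr1 val) /= x0.
rewrite -val_eqE /= -lt0n => y0 /(_ ord_max isT) xy.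
apply: (no_cross _ (x ord_max) y0) => [|i|i].
- by rewrite -ltnS ltn_ord.
- by move: (xS i); rewrite mxE !row_val2 !pt2_0 ?pt2_1 // x0.
- by move: (yS i); rewrite mxE !row_val2 !pt2_0 ?pt2_1 // xy.
Qed.

Lemma disconnected_rows_pp_nn i k :
  0 < A i ord0 -> 0 < A i ord_max -> A k ord0 < 0 -> A k ord_max < 0 ->
  ~ sol_graph_connected (sol_set d A (min_rhs A (pt2 d 0 1) (pt2 d 1 0))).
Proof.
move=> Ai0 Ai1 Ak0 Ak1; apply: pt2_disconnected => // s t s_gt0 _.
move=> /(_ i) + /(_ k); rewrite /lin2 !ge_min => xi yk.
have s1 : 1 <= s%:R :> R by rewrite ler1n.
have t1 : 1 <= t%:R :> R.
  case: (posnP t) => [t0|]; last by rewrite ler1n.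
  by move: xi; rewrite t0 => /orP[]; lra.
by case/orP: yk; nra.
Qed.

Lemma disconnected_rows_pn_np i k :
  0 < A i ord0 -> A i ord_max < 0 -> A k ord0 < 0 -> 0 < A k ord_max ->
  ~ sol_graph_connected (sol_set d A (min_rhs A (pt2 d 0 d.-1) (pt2 d 1 d))).
Proof.
move=> Ai0 Ai1 Ak0 Ak1.
apply: pt2_disconnected; rewrite ?leq_pred // => s t s_gt0 td.
move=> /(_ i) + /(_ k); rewrite /lin2 !ge_min => xi yk.
have s1 : 1 <= s%:R :> R by rewrite ler1n.
have Dd : d%:R = d.-1%:R + 1 :> R by rewrite natr1 prednK.
have td1 : t%:R <= d.-1%:R :> R.
  rewrite ler_nat -ltnS prednK // ltn_neqAle td andbT.
  by apply/eqP => tE; move: xi; rewrite tE Dd => /orP[]; nra.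
by move: yk; rewrite Dd => /orP[]; nra.
Qed.

Lemma opposite_rows_disconnected i k :
  0 < A i ord0 -> A k ord0 < 0 -> A i ord_max * A k ord_max < 0 ->
  exists b, ~ sol_graph_connected (sol_set d A b).
Proof.
move=> Ai0 Ak0; case: (ltrgt0P (A i ord_max)) => [Ai1|Ai1|->].
- rewrite pmulr_rlt0 // => Ak1.
  by eexists; exact: disconnected_rows_pp_nn Ai0 Ai1 Ak0 Ak1.
- rewrite nmulr_rlt0 // => Ak1.
  by eexists; exact: disconnected_rows_pn_np Ai0 Ai1 Ak0 Ak1.
- by rewrite mul0r ltxx.
Qed.

End TwoColumns.

Lemma ord2_other (c c' j : 'I_2) : c != c' -> j != c -> j = c'.
Proof.
move: c c' j => [[|[|//]] ?] [[|[|//]] ?] [[|[|//]] ?] //= _ _; exact: val_inj.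
Qed.

Section EliminationOrderings.

Variables (R : realType) (m : nat) (A : 'M[R]_(m, 2)).

Lemma can_elim2 c c' : c != c' ->
  can_elim A setT c =
  [forall i, (0 < A i c) ==> (A i c' == 0)] ||
  [forall i, (A i c < 0) ==> (A i c' == 0)].
Proof.
move=> cc'.
have others i : [forall j in setT, (j != c) ==> (A i j == 0)] = (A i c' == 0).
  apply/forall_inP/idP => [/(_ c' (in_setT _))|Aic' j _].
    by rewrite eq_sym cc'.
  by apply/implyP => /(ord2_other cc') ->.
rewrite /can_elim in_setT; congr (_ || _).
all: by apply: eq_forallb => i; rewrite others.
Qed.

Lemma has_EO_of_can_elim2 c c' : c != c' -> can_elim A setT c -> has_EO A.
Proof.
move=> cc' elim_c; exists [:: c; c']; split.
  apply: uniq_perm; [by rewrite /= inE cc' | exact: enum_uniq |] => j.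
  rewrite mem_enum !inE; have [//|/(ord2_other cc') ->] := eqVneq j c.
  by rewrite eqxx orbT.
move=> [|[|//]] j0 _ /=.
  have -> // : [set j : 'I_2 | j \notin [::]] = setT.
  by apply/setP => j; rewrite !inE.
rewrite /can_elim inE mem_seq1 eq_sym cc' /=.
apply/orP; left; apply/forallP => i; apply/implyP => _.
apply/forall_inP => j; rewrite inE mem_seq1 => jc; apply/implyP.
by rewrite (ord2_other cc' jc) eqxx.
Qed.

Lemma not_can_elim2 c c' (cc' : c != c') : ~~ can_elim A setT c ->
  (exists2 i, 0 < A i c & A i c' != 0) /\ (exists2 k, A k c < 0 & A k c' != 0).
Proof.
rewrite (can_elim2 cc') negb_or => /andP[/forallPn[i] + /forallPn[k]].
by rewrite !negb_imply => /andP[? ?] /andP[? ?]; split; [exists i | exists k].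
Qed.

Lemma no_EO_opposite_rows : ~ has_EO A ->
  exists i k, [/\ 0 < A i ord0, A k ord0 < 0 & A i ord_max * A k ord_max < 0].
Proof.
move=> noEO.
have no_elim c c' : c != c' -> ~~ can_elim A setT c.
  by move=> cc'; apply/negP => /(has_EO_of_can_elim2 cc').
have n01 : ord0 != ord_max :> 'I_2 by [].
have [[i1 Ai1_0 Ai1_1] [k1 Ak1_0 Ak1_1]] := not_can_elim2 n01 (no_elim _ _ n01).
have n10 : ord_max != ord0 :> 'I_2 by [].
have [[i2 Ai2_1 Ai2_0] [k2 Ak2_1 Ak2_0]] := not_can_elim2 n10 (no_elim _ _ n10).
have [opp|same] := ltP (A i1 ord_max * A k1 ord_max) 0; first by exists i1, k1.
case/orP: (lt_total Ai1_1) => [neg|pos].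
- have Ak1_neg : A k1 ord_max < 0 by case/orP: (lt_total Ak1_1) => //; nra.
  case/orP: (lt_total Ai2_0) => ?; [exists i1, i2 | exists i2, k1];
    by split => //; nra.
- have Ak1_pos : 0 < A k1 ord_max by case/orP: (lt_total Ak1_1) => //; nra.
  case/orP: (lt_total Ak2_0) => ?; [exists i1, k2 | exists k2, k1];
    by split => //; nra.
Qed.

End EliminationOrderings.

Theorem lemma5 (R : realType) (d m : nat) (hd : (0 < d)%N) (A : 'M[R]_(m, 2)) :
  ~ has_EO A ->
  exists b : 'cV[R]_m, ~ sol_graph_connected (sol_set d A b).
Proof.
move=> /no_EO_opposite_rows [i [k [Ai0 Ak0 opp]]].
exact: (opposite_rows_disconnected hd Ai0 Ak0 opp).
Qed.
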